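(* Let $\mathcal{H}$ be a complex Hilbert space, let $T\in\mathcal{B}(\mathcal{H})$ be a normaloid operator, and let $q\in\mathbb{C}$ with $|q|\le 1$. Then \[ |q|\, w(T)\le w_q(T)\le w(T). \]
   Context: $\mathcal{B}(\mathcal{H})$ denotes the bounded linear operators on $\mathcal{H}$ with the operator norm $\|\cdot\|$. The numerical radius is $w(T)=\sup\{|\langle Tx,x\rangle|:\|x\|=1\}$. For $|q|\le 1$, the $q$-numerical range is $W_q(T)=\{\langle Tx,y\rangle: x,y\in\mathcal{H},\ \|x\|=\|y\|=1,\ \langle x,y\rangle=q\}$ and the $q$-numerical radius is $w_q(T)=\sup\{|z|: z\in W_q(T)\}$. An operator $T$ is normaloid if $w(T)=\|T\|$. *)

From HB Require Import structures.
From mathcomp Require Import all_boot all_order all_algebra.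
From mathcomp Require Import all_classical all_reals complex.
Set Implicit Arguments. Unset Strict Implicit. Unset Printing Implicit Defensive.
Import Order.TTheory GRing.Theory Num.Theory.
Local Open Scope ring_scope.
Local Open Scope classical_set_scope.

Definition cmod (R : realType) (z : R[i]) : R :=
  Num.sqrt (complex.Re z ^+ 2 + complex.Im z ^+ 2).

Record hilbert (R : realType) := Hilbert {
  hV :> lmodType R[i];
  hinner : hV -> hV -> R[i];
  hinnerDl : forall (a : R[i]) (x y z : hV),
      hinner (a *: x + y) z = a * hinner x z + hinner y z;
  hinner_conj : forall x y : hV, hinner y x = conjc (hinner x y);
  hinner_ge0 : forall x : hV, complex.Im (hinner x x) = 0 /\ 0 <= complex.Re (hinner x x);
  hinner_eq0 : forall x : hV, hinner x x = 0 -> x = 0;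
  hnorm_complete : forall u : nat -> hV,
      (forall e : R, 0 < e -> exists N : nat, forall m n : nat, (N <= m)%N -> (N <= n)%N ->
         Num.sqrt (complex.Re (hinner (u m - u n) (u m - u n))) < e) ->
      exists l : hV, forall e : R, 0 < e -> exists N : nat, forall n : nat, (N <= n)%N ->
         Num.sqrt (complex.Re (hinner (u n - l) (u n - l))) < e
}.

Arguments hinner {R} h.

Definition hnorm (R : realType) (H : hilbert R) (x : H) : R :=
  Num.sqrt (complex.Re (hinner H x x)).

Definition bounded_op (R : realType) (H : hilbert R) (T : {linear H -> H}) : Prop :=
  exists M : R, forall x : H, hnorm (T x) <= M * hnorm x.

Definition opnorm (R : realType) (H : hilbert R) (T : {linear H -> H}) : R :=
  sup [set hnorm (T x) | x in [set x : H | hnorm x = 1]].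

Definition numrad (R : realType) (H : hilbert R) (T : {linear H -> H}) : R :=
  sup [set cmod (hinner H (T x) x) | x in [set x : H | hnorm x = 1]].

Definition qnumrange (R : realType) (H : hilbert R) (q : R[i]) (T : {linear H -> H})
  : set R[i] :=
  [set z | exists x y : H, [/\ hnorm x = 1, hnorm y = 1, hinner H x y = q
                              & z = hinner H (T x) y]].

Definition qnumrad (R : realType) (H : hilbert R) (q : R[i]) (T : {linear H -> H}) : R :=
  sup [set cmod z | z in qnumrange q T].

Definition normaloid (R : realType) (H : hilbert R) (T : {linear H -> H}) : Prop :=
  numrad T = opnorm T.

From HB Require Import structures.
From mathcomp Require Import all_boot all_order all_algebra.
From mathcomp Require Import all_classical all_reals complex.
From mathcomp Require Import ring lra.
Set Implicit Arguments. Unset Strict Implicit. Unset Printing Implicit Defensive.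
Import Order.TTheory GRing.Theory Num.Theory.
Local Open Scope ring_scope.
Local Open Scope classical_set_scope.
Local Open Scope complex_scope.

(* For a unit vector x choose a unit vector z orthogonal to x and put
   y = q^* x +- sqrt(1 - |q|^2) z.  Then <x, y> = q and
   <Tx, y> = q <Tx, x> +- sqrt(1 - |q|^2) <Tx, z>, so for one of the two signs
   |<Tx, y>| >= |q| |<Tx, x>|; taking suprema gives |q| w(T) <= w_q(T).
   Conversely |<Tx, y>| <= ||Tx|| <= ||T|| by Cauchy-Schwarz, and ||T|| = w(T)
   because T is normaloid. *)

Section ComplexModulus.
Variable R : realType.
Implicit Types a b : R[i].

Lemma cmod_normc a : cmod a = Normc.normc a.
Proof. by case: a. Qed.

Lemma cmod_ge0 a : 0 <= cmod a.
Proof. exact: sqrtr_ge0. Qed.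

Lemma cmodM a b : cmod (a * b) = cmod a * cmod b.
Proof. by rewrite !cmod_normc Normc.normcM. Qed.

Lemma cmodD a b : cmod (a + b) <= cmod a + cmod b.
Proof. by rewrite !cmod_normc; exact: le_normcD. Qed.

Lemma mulc_conj a : a * conjc a = (cmod a ^+ 2)%:C.
Proof. by rewrite -sqr_normc normc_def rmorphXn. Qed.

Lemma cmod_le_addr_or_subr a b : cmod a <= cmod (a + b) \/ cmod a <= cmod (a - b).
Proof.
have : cmod (a + a) <= cmod (a + b) + cmod (a - b).
  have -> : a + a = (a + b) + (a - b) by ring.
  exact: cmodD.
rewrite -mulr2n cmod_normc normcMn -cmod_normc mulr2n.
by case: (leP (cmod a) (cmod (a + b))) => ?; [left | right; lra].
Qed.

End ComplexModulus.

Section InnerProduct.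
Variables (R : realType) (H : hilbert R).
Local Notation ip := (hinner H).
Implicit Types (x y z u : H) (a : R[i]).

Lemma ip0l z : ip 0 z = 0.
Proof.
have := hinnerDl 1 (0 : H) 0 z; rewrite scaler0 addr0 mul1r => h.
by apply: (addrI (ip 0 z)); rewrite addr0 -h.
Qed.

Lemma ipZl a x z : ip (a *: x) z = a * ip x z.
Proof. by have := hinnerDl a x 0 z; rewrite addr0 ip0l addr0. Qed.

Lemma ipDl x y z : ip (x + y) z = ip x z + ip y z.
Proof. by have := hinnerDl 1 x y z; rewrite scale1r mul1r. Qed.

Lemma ipBl x y z : ip (x - y) z = ip x z - ip y z.
Proof. by rewrite ipDl -scaleN1r ipZl mulN1r. Qed.

Lemma ipZr a x z : ip x (a *: z) = conjc a * ip x z.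
Proof. by rewrite hinner_conj ipZl rmorphM /= -hinner_conj. Qed.

Lemma ipDr x y z : ip x (y + z) = ip x y + ip x z.
Proof. by rewrite hinner_conj ipDl rmorphD /= -!hinner_conj. Qed.

Lemma ipBr x y z : ip x (y - z) = ip x y - ip x z.
Proof. by rewrite ipDr -scaleN1r ipZr rmorphN rmorph1 mulN1r. Qed.

Lemma ipxx x : ip x x = (hnorm x ^+ 2)%:C.
Proof.
have [ImE ReP] := hinner_ge0 x.
by rewrite /hnorm sqr_sqrtr //; case: (ip x x) ImE => ? ? /= ->.
Qed.

Lemma hnorm_ge0 x : 0 <= hnorm x.
Proof. exact: sqrtr_ge0. Qed.

Lemma hnorm0 : hnorm (0 : H) = 0.
Proof. by rewrite /hnorm ip0l sqrtr0. Qed.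

Lemma hnorm_eq0 x : hnorm x = 0 -> x = 0.
Proof. by move=> x0; apply: hinner_eq0; rewrite ipxx x0 expr0n. Qed.

Lemma hnorm_eq1 x : hnorm x = 1 <-> ip x x = 1.
Proof. by rewrite ipxx; split=> [-> | x1]; rewrite ?expr1n // /hnorm ipxx x1 sqrtr1. Qed.

Lemma cauchy_schwarz_unit u y : hnorm y = 1 -> cmod (ip u y) <= hnorm u.
Proof.
move=> /hnorm_eq1 y1; set a := ip u y.
(* 0 <= |u - <u,y> y|^2 = |u|^2 - |<u,y>|^2 *)
have : 0 <= ip (u - a *: y) (u - a *: y) by rewrite ipxx ler0c sqr_ge0.
rewrite ipBl ipZl !ipBr !ipZr y1 [ip y u]hinner_conj -/a.
have -> : ip u u - conjc a * a - a * (conjc a - conjc a * 1) = ip u u - a * conjc a by ring.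
rewrite subr_ge0 mulc_conj ipxx lecR => le_sqr.
by rewrite -(ler_pXn2r (n := 2)) // ?nnegrE ?cmod_ge0 ?hnorm_ge0.
Qed.

Lemma exists_unit_orthogonal :
    (exists e1 e2 : H, [/\ hnorm e1 = 1, hnorm e2 = 1 & ip e1 e2 = 0]) ->
  forall x, hnorm x = 1 -> exists z, hnorm z = 1 /\ ip x z = 0.
Proof.
move=> [e1 [e2 [e1_1 e2_1 e12]]] x x1.
have [xe2 | xe2] := eqVneq (ip x e2) 0; first by exists e2.
(* Gram-Schmidt on e1: it is not a multiple of x, since e1 is orthogonal to e2
   while x is not. *)
set u := e1 - ip e1 x *: x.
have ux : ip u x = 0 by rewrite ipBl ipZl (hnorm_eq1 x).1 // mulr1 subrr.
have u_neq0 : hnorm u != 0.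
  apply/eqP => /hnorm_eq0 /eqP; rewrite subr_eq0 => /eqP e1E.
  move: e12; rewrite e1E ipZl => /eqP; rewrite mulf_eq0 (negbTE xe2) orbF => /eqP e1x.
  by move: e1_1; rewrite e1E e1x scale0r hnorm0 => /eqP; rewrite eq_sym oner_eq0.
exists ((hnorm u)^-1%:C *: u); split.
  apply/hnorm_eq1; rewrite ipZl ipZr conjc_real ipxx -!rmorphM /=.
  by rewrite mulrA -expr2 -exprMn mulVf // expr1n.
by rewrite hinner_conj ipZl ux mulr0 conjc0.
Qed.

Definition qpartner (q : R[i]) (c : R) x z : H := conjc q *: x + c%:C *: z.

Lemma qpartnerP u q c x z :
    hnorm x = 1 -> hnorm z = 1 -> ip x z = 0 -> c ^+ 2 = 1 - cmod q ^+ 2 ->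
  [/\ hnorm (qpartner q c x z) = 1, ip x (qpartner q c x z) = q
    & ip u (qpartner q c x z) = q * ip u x + c%:C * ip u z].
Proof.
move=> /hnorm_eq1 x1 /hnorm_eq1 z1 xz c2.
have zx : ip z x = 0 by rewrite hinner_conj xz conjc0.
have xy : ip x (qpartner q c x z) = q by rewrite ipDr !ipZr conjcK conjc_real x1 xz; ring.
have zy : ip z (qpartner q c x z) = c%:C by rewrite ipDr !ipZr conjcK conjc_real zx z1; ring.
split => //; last by rewrite ipDr !ipZr conjcK conjc_real.
apply/hnorm_eq1; rewrite ipDl !ipZl xy zy -rmorphM -expr2 c2 rmorphB rmorph1.
by rewrite mulrC mulc_conj addrC subrK.
Qed.

Lemma exists_qpartner q x u :
    (exists e1 e2 : H, [/\ hnorm e1 = 1, hnorm e2 = 1 & ip e1 e2 = 0]) ->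
    cmod q <= 1 -> hnorm x = 1 ->
  exists y, [/\ hnorm y = 1, ip x y = q & cmod q * cmod (ip u x) <= cmod (ip u y)].
Proof.
move=> orth q_le1 x1; have [z [z1 xz]] := exists_unit_orthogonal orth x1.
set s := Num.sqrt (1 - cmod q ^+ 2).
have s2 : s ^+ 2 = 1 - cmod q ^+ 2.
  by rewrite sqr_sqrtr // subr_ge0 expr_le1 ?cmod_ge0.
have [le_sum | le_diff] := cmod_le_addr_or_subr (q * ip u x) (s%:C * ip u z).
  have [y1 xy uy] := qpartnerP u x1 z1 xz s2.
  by exists (qpartner q s x z); rewrite uy -cmodM.
have [y1 xy uy] := qpartnerP u x1 z1 xz (etrans (sqrrN s) s2).
by exists (qpartner q (- s) x z); rewrite uy rmorphN mulNr -cmodM.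
Qed.

End InnerProduct.

Lemma ler_wpM_sup (R : realType) (k : R) (A B : set R) :
    0 <= k -> A !=set0 -> has_ubound B ->
    (forall a, A a -> exists2 b, B b & k * a <= b) ->
  k * sup A <= sup B.
Proof.
move=> k_ge0 [a0 Aa0] ubB dom.
have [k0 | k_neq0] := eqVneq k 0.
  have [b Bb] := dom a0 Aa0; rewrite k0 !mul0r => b_ge0.
  exact: le_trans b_ge0 (ub_le_sup ubB Bb).
have k_gt0 : 0 < k by rewrite lt_def k_neq0 k_ge0.
rewrite mulrC -ler_pdivlMr //; apply: ge_sup; first by exists a0.
move=> a Aa; rewrite ler_pdivlMr // mulrC.
have [b Bb kab] := dom a Aa; exact: le_trans kab (ub_le_sup ubB Bb).
Qed.

Section Radii.
Variables (R : realType) (H : hilbert R) (T : {linear H -> H}).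
Hypothesis orth :
  exists e1 e2 : H, [/\ hnorm e1 = 1, hnorm e2 = 1 & hinner H e1 e2 = 0].
Hypothesis T_bounded : bounded_op T.
Variable q : R[i].
Hypothesis q_le1 : cmod q <= 1.

Local Notation unit_sphere := [set x : H | hnorm x = 1].

Lemma qnumrange_le_hnorm z :
  qnumrange q T z -> exists2 x, unit_sphere x & cmod z <= hnorm (T x).
Proof. by move=> [x [y [x1 y1 _ ->]]]; exists x => //; exact: cauchy_schwarz_unit. Qed.

Lemma has_ubound_opnorm_set : has_ubound [set hnorm (T x) | x in unit_sphere].
Proof. by have [M TM] := T_bounded; exists M => _ [x /= x1 <-]; rewrite -[M]mulr1 -x1. Qed.

Lemma qnumrad_le_opnorm : qnumrad q T <= opnorm T.
Proof.
have [e1 [_ [e1_1 _ _]]] := orth.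
apply: sup_le.
- move=> _ [z /qnumrange_le_hnorm [x x1 zx] <-].
  by apply/downP; exists (hnorm (T x)) => //; exists x.
- have [y [y1 e1y _]] := exists_qpartner (T e1) orth q_le1 e1_1.
  by exists (cmod (hinner H (T e1) y)), (hinner H (T e1) y) => //; exists e1, y.
- by split; [exists (hnorm (T e1)), e1 | exact: has_ubound_opnorm_set].
Qed.

Lemma scale_numrad_le_qnumrad : cmod q * numrad T <= qnumrad q T.
Proof.
have [e1 [_ [e1_1 _ _]]] := orth.
apply: ler_wpM_sup; first exact: cmod_ge0.
- by exists (cmod (hinner H (T e1) e1)), e1.
- have [M ubM] := has_ubound_opnorm_set; exists M => _ [z /qnumrange_le_hnorm [x x1 zx] <-].
  by apply: le_trans zx (ubM _ _); exists x.
- move=> _ [x /= x1 <-]; have [y [y1 xy le_qy]] := exists_qpartner (T x) orth q_le1 x1.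
  by exists (cmod (hinner H (T x) y)) => //; exists (hinner H (T x) y) => //; exists x, y.
Qed.

End Radii.

Theorem theorem2p7 (R : realType) (H : hilbert R)
    (Hdim : exists e1 e2 : H, [/\ hnorm e1 = 1, hnorm e2 = 1 & hinner H e1 e2 = 0])
    (T : {linear H -> H}) (Tb : bounded_op T) (Tn : normaloid T)
    (q : R[i]) (hq : cmod q <= 1) :
  cmod q * numrad T <= qnumrad q T /\ qnumrad q T <= numrad T.
Proof.
split; first exact: scale_numrad_le_qnumrad.
by rewrite Tn; exact: qnumrad_le_opnorm.
Qed.
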